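(* Let $X$ be a scalar random variable with unknown distribution $\pi$ and an upper bound $u_b \in \mathbb{R}$ such that $\mathbb{P}_{\pi}[X \leq u_b] = 1$. Let $x_1,\dots,x_N$ be $N$ independent samples of $X$, and let $\zeta^*_N$ be the solution of the program $\min_{\zeta \in \mathbb{R}} \zeta$ subject to $\zeta \geq x_i$ for all $i=1,\dots,N$ (i.e. $\zeta^*_N = \max_{1\le k\le N} x_k$). Then for every $\epsilon \in [0,1]$, \[ \mathbb{P}^N_{\pi}\left[\mathbb{E}_{\pi}[X] \leq \zeta^*_N(1-\epsilon) + u_b\epsilon\right] \geq 1-(1-\epsilon)^N . \]
   Context: $\mathbb{P}^N_{\pi}$ denotes the $N$-fold product probability measure governing the i.i.d. sample $(x_1,\dots,x_N)$ drawn from $\pi$. *)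

From HB Require Import structures.
From mathcomp Require Import all_boot all_order all_algebra.
From mathcomp Require Import all_classical all_reals all_analysis.
Set Implicit Arguments. Unset Strict Implicit. Unset Printing Implicit Defensive.
Import Order.TTheory GRing.Theory Num.Theory.
Local Open Scope classical_set_scope.
Local Open Scope ring_scope.

(* Mutual independence of the finite family of real random variables
   (X i)_{i < N} on the probability space (Omega, P): for every family of
   Borel sets B_i, P(/\_i {X i in B i}) = prod_i P{X i in B i}.
   (Choosing B_i = setT recovers every finite subfamily.) *)
Definition mutually_independent_RVs d (Omega : measurableType d) (R : realType)
  (P : probability Omega R) (N : nat) (X : 'I_N -> Omega -> R) : Prop :=
  forall B : 'I_N -> set R, (forall i, measurable (B i)) ->
    P [set w | forall i, B i (X i w)] = (\prod_(i < N) P (X i @^-1` B i))%E.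

Definition has_law d (Omega : measurableType d) (R : realType)
  (P : probability Omega R) (X : Omega -> R) (pi : probability R R) : Prop :=
  forall B : set R, measurable B -> P (X @^-1` B) = pi B.

(* Let S be the set of thresholds t whose upper tail pi ]t, +oo[ exceeds eps.
   S is down-closed and bounded by u_b, so continuity of pi from below gives
   pi S <= 1 - eps, and by independence all N samples lie in S with probability
   at most (1 - eps)^N.  Otherwise some sample x_i has tail mass at most eps;
   bounding X by the step function x_i + (u_b - x_i) 1_{X > x_i} then gives
   E X <= x_i (1 - eps) + u_b eps <= zeta (1 - eps) + u_b eps. *)

From HB Require Import structures.
From mathcomp Require Import all_boot all_order all_algebra.
From mathcomp Require Import all_classical all_reals all_analysis.
From mathcomp Require Import measurable_realfun lra zify.
Set Implicit Arguments.
Unset Strict Implicit.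
Unset Printing Implicit Defensive.
Import Order.TTheory GRing.Theory Num.Theory.
Local Open Scope classical_set_scope.
Local Open Scope ring_scope.

Lemma ae_le_integral d (T : measurableType d) (R : realType)
    (mu : {measure set T -> \bar R}) (f g : T -> \bar R) :
  measurable_fun [set: T] f -> measurable_fun [set: T] g ->
  {ae mu, forall x, (f x <= g x)%E} -> (\int[mu]_x f x <= \int[mu]_x g x)%E.
Proof.
move=> mf mg fg; rewrite (integralE _ _ f) (integralE _ _ g).
apply: leeB; apply: ae_ge0_le_integral => //;
  do ?[exact: measurable_funepos | exact: measurable_funeneg];
  apply: filterS fg => x fgx _.
- by rewrite !funeposE le_max2.
- by rewrite !funenegE le_max2 ?leeN2.
Qed.

Definition down_closed {R : realType} (S : set R) :=
  forall s t, t <= s -> S s -> S t.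

Section down_closed_sets.
Variables (R : realType) (S : set R).
Hypothesis S_down : down_closed S.

Lemma down_closed_measurable : measurable S.
Proof.
by apply: is_interval_measurable => x y _ Sy z /andP[_ zy]; exact: S_down zy Sy.
Qed.

Lemma measure_down_closed_le (mu : {measure set R -> \bar R}) (p : \bar R) :
  (0 <= p)%E -> has_ubound S -> (forall t, S t -> (mu `]-oo, t]%classic <= p)%E) ->
  (mu S <= p)%E.
Proof.
move=> p_ge0 S_ub mu_le.
have [->|/set0P[s0 Ss0]] := eqVneq S set0; first by rewrite measure0.
have S_sup : has_sup S by split; [exists s0 | ].
set c := sup S; have S_le_c : ubound S c := sup_upper_bound S_sup.
have mS := down_closed_measurable.
have [Sc|nSc] := pselect (S c).
  by apply: le_trans (le_measure _ _ _ _) (mu_le c Sc); rewrite ?inE.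
pose F n := `]-oo, c - n.+1%:R^-1]%classic.
have SF n : S (c - n.+1%:R^-1).
  have inv_gt0 : 0 < n.+1%:R^-1 :> R by rewrite invr_gt0.
  have [e Se ce] := sup_adherent inv_gt0 S_sup.
  exact: S_down (ltW ce) Se.
have S_sub_F : S `<=` \bigcup_n F n.
  move=> t St; have tc : t < c.
    by rewrite lt_neqAle S_le_c // andbT; apply: contraPneq nSc => <-.
  have : `[t, c[%classic t by rewrite /= in_itv /= lexx tc.
  rewrite itv_bnd_open_bigcup => -[n _]; rewrite /= in_itv /= => /andP[_ tn].
  by exists n => //; rewrite /F /= in_itv.
have F_nd : nondecreasing_seq F.
  apply/nondecreasing_seqP => n; apply/subsetPset => t; rewrite /F /= !in_itv /=.
  move/le_trans; apply; rewrite lerB // lef_pV2 ?posrE ?ltr0Sn // ler_nat; lia.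
have mF n : measurable (F n) by exact: measurable_itv.
have mUF : measurable (\bigcup_n F n) by exact: bigcupT_measurable.
apply: le_trans (le_measure _ _ _ S_sub_F) _; rewrite ?inE //.
apply: cvge_to_le (nondecreasing_cvg_mu mF mUF F_nd) _.
by apply: nearW => n; exact: mu_le _ (SF n).
Qed.
End down_closed_sets.

Lemma measurable_bigmaxe d (T : measurableType d) (R : realType) (I : Type)
    (r : seq I) (P : pred I) (f : I -> T -> \bar R) :
  (forall i, measurable_fun [set: T] (f i)) ->
  measurable_fun [set: T] (fun w => \big[Order.max/-oo%E]_(i <- r | P i) f i w).
Proof.
move=> mf; elim: r => [|i r IH].
  by under eq_fun do rewrite big_nil; exact: measurable_cst.
under eq_fun do rewrite big_cons.
by case: (P i) => //; exact: measurable_maxe.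
Qed.

Lemma measurable_all_in d (Omega : measurableType d) (R : realType)
    (I : finType) (x : I -> Omega -> R) (B : set R) :
  (forall i, measurable_fun [set: Omega] (x i)) -> measurable B ->
  measurable [set w | forall i, B (x i w)].
Proof.
move=> mx mB; rewrite (_ : [set w | _] = \bigcap_(i in [set: I]) (x i @^-1` B)).
  apply: fin_bigcap_measurable; first exact: finite_finset.
  by move=> i _; rewrite -(setTI (_ @^-1` _)); exact: mx.
by apply/seteqP; split => w /= Bw i; [move=> _ |]; exact: Bw.
Qed.

Lemma iid_all_in_le d (Omega : measurableType d) (R : realType)
    (P : probability Omega R) (pi : probability R R) (N : nat)
    (x : 'I_N -> Omega -> R) (B : set R) (p : R) :
  mutually_independent_RVs P x -> (forall i, has_law P (x i) pi) ->
  measurable B -> (pi B <= p%:E)%E ->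
  (P [set w | forall i, B (x i w)] <= (p ^+ N)%:E)%E.
Proof.
move=> x_ind x_law mB piB; rewrite (x_ind (fun=> B) (fun=> mB)).
under eq_bigr do rewrite (x_law _ _ mB).
rewrite -(fineK (fin_num_measure pi B mB)) prodEFin lee_fin.
rewrite -[X in _ <= p ^+ X](card_ord N) -prodr_const.
apply: ler_prod => i _; rewrite fine_ge0 //= -lee_fin fineK //.
exact: fin_num_measure.
Qed.

Definition tail_gt {R : realType} (pi : probability R R) (eps : R) : set R :=
  [set t | (eps%:E < pi `]t, +oo[%classic)%E].

Section bounded_law.
Variables (R : realType) (pi : probability R R) (u_b : R).
Hypothesis pi_ub : pi `]-oo, u_b]%classic = 1%E.
Variable eps : R.
Hypotheses (eps_ge0 : 0 <= eps) (eps_le1 : eps <= 1).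

Lemma probability_itvoy_ub : pi `]u_b, +oo[%classic = 0%E.
Proof. by rewrite -setCitvl probability_setC ?pi_ub ?subee. Qed.

Lemma ae_le_ub : {ae pi, forall y, y <= u_b}.
Proof.
exists `]u_b, +oo[%classic; split; [exact: measurable_itv | exact: probability_itvoy_ub |].
by move=> y /= /negP; rewrite in_itv /= andbT -ltNge.
Qed.

Lemma integral_id_le_step (z : R) : z <= u_b ->
  (\int[pi]_y y%:E <= z%:E + (u_b - z)%:E * pi `]z, +oo[%classic)%E.
Proof.
move=> zub; set A := `]z, +oo[%classic; have mA : measurable A by exact: measurable_itv.
have step_ae : {ae pi, forall y, (y%:E <= z%:E + (u_b - z)%:E * (\1_A y)%:E)%E}.
  apply: filterS ae_le_ub => y yub; rewrite indicE.
  have [yz|yz] := leP y z.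
    by rewrite memNset ?mule0 ?adde0 ?lee_fin //= /A /= in_itv /= andbT ltNge yz.
  by rewrite mem_set ?mule1 -?EFinD ?lee_fin /A /= ?in_itv /= ?yz //; lra.
apply: (@le_trans _ _ (\int[pi]_y (z%:E + (u_b - z)%:E * (\1_A y)%:E))%E).
  apply: ae_le_integral step_ae.
  - by apply/measurable_EFinP; exact: measurable_id.
  - apply: emeasurable_funD; first exact: measurable_cst.
    apply: emeasurable_funM; first exact: measurable_cst.
    by apply/measurable_EFinP; exact: measurable_indic.
rewrite integralD //=.
- rewrite integral_cst // [X in (_ * X)%E](probability_setT pi) mule1.
  rewrite integralZl //; last exact: integrable_indic.
  by rewrite integral_indic // setIT.
- exact: finite_measure_integrable_cst.
- by apply: integrableZl => //; exact: integrable_indic.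
Qed.

Lemma integral_id_le_tail (z : R) : (pi `]z, +oo[%classic <= eps%:E)%E ->
  (\int[pi]_y y%:E <= (z * (1 - eps) + u_b * eps)%:E)%E.
Proof.
move=> tail_le; have [ub_le_z|z_lt_ub] := leP u_b z.
  apply: le_trans (integral_id_le_step (lexx u_b)) _.
  rewrite subrr mul0e adde0 lee_fin.
  have : 0 <= (z - u_b) * (1 - eps) by rewrite mulr_ge0 // subr_ge0.
  lra.
apply: le_trans (integral_id_le_step (ltW z_lt_ub)) _.
have ubz_ge0 : (0 <= (u_b - z)%:E)%E by rewrite lee_fin subr_ge0 ltW.
apply: le_trans (leeD2l _ (lee_wpmul2l ubz_ge0 tail_le)) _.
by rewrite -EFinM -EFinD lee_fin; nra.
Qed.

Lemma tail_gt_down_closed : down_closed (tail_gt pi eps).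
Proof.
move=> s t ts; rewrite /tail_gt /= => /lt_le_trans; apply.
apply: le_measure; rewrite ?inE; try exact: measurable_itv.
by move=> y; rewrite /= !in_itv /= !andbT; exact: le_lt_trans.
Qed.

Lemma tail_gt_ubound : ubound (tail_gt pi eps) u_b.
Proof.
move=> t tail_t; rewrite leNgt; apply/negP => ub_lt_t.
have := tail_gt_down_closed (ltW ub_lt_t) tail_t.
by rewrite /tail_gt /= probability_itvoy_ub ltNge lee_fin eps_ge0.
Qed.

Lemma probability_tail_gt : (pi (tail_gt pi eps) <= (1 - eps)%:E)%E.
Proof.
apply: (measure_down_closed_le tail_gt_down_closed).
- by rewrite lee_fin subr_ge0.
- by exists u_b; exact: tail_gt_ubound.
move=> t tail_t.
(* [probability_setC] needs [pi] seen as a probability, not as the bare measure of the goal. *)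
have pi_le : (pi `]-oo, t]%classic <= (1 - eps)%:E)%E.
  rewrite -setCitvr probability_setC; last exact: measurable_itv.
  by rewrite EFinB leeB // ltW.
exact: pi_le.
Qed.

End bounded_law.

Theorem theorem5 (R : realType) (pi : probability R R) (u_b : R)
  (hub : pi [set y : R | y <= u_b] = 1%E)
  (d : measure_display) (Omega : measurableType d) (P : probability Omega R)
  (N : nat) (x : 'I_N -> Omega -> R)
  (hmeas : forall i, measurable_fun setT (x i))
  (hlaw : forall i, has_law P (x i) pi)
  (hind : mutually_independent_RVs P x)
  (eps : R) (heps0 : 0 <= eps) (heps1 : eps <= 1) :
  let zeta := fun w => (\big[Order.max/-oo]_(k < N) (x k w)%:E)%E in
  (P [set w | (\int[pi]_y y%:E <= zeta w * (1 - eps)%:E + (u_b * eps)%:E)%E]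
     >= (1 - (1 - eps) ^+ N)%:E)%E.
Proof.
cbv beta zeta; rewrite -set_itvNyc in hub.
set S := tail_gt pi eps; set A := [set w | forall i, S (x i w)].
set T := [set w | _].
have mS : measurable S by apply: down_closed_measurable; exact: tail_gt_down_closed.
have mA : measurable A := measurable_all_in hmeas mS.
have mT : measurable T.
  rewrite -(setTI T); apply: measurable_lee => //.
  apply: emeasurable_funD; last exact: measurable_cst.
  apply: emeasurable_funM => //; apply: measurable_bigmaxe => k.
  by apply/measurable_EFinP; exact: hmeas.
have PA := iid_all_in_le hind hlaw mS (probability_tail_gt hub heps0 heps1).
have notA_T : ~` A `<=` T.
  move=> w /existsNP[i /negP]; rewrite /S /tail_gt /= -leNgt => tail_le.
  apply: le_trans (integral_id_le_tail hub heps1 tail_le) _.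
  rewrite EFinD EFinM leeD2r // lee_wpmul2r ?lee_fin ?subr_ge0 //.
  exact: le_bigmax.
have PnotA : ((1 - (1 - eps) ^+ N)%:E <= P (~` A))%E.
  by rewrite probability_setC // EFinB leeB.
apply: le_trans PnotA (le_measure _ _ _ notA_T); rewrite ?inE //.
exact: measurableC.
Qed.
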